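(* Let $c\in(0,1)$ and let $f:[0,1]\to[0,1]$ be a piecewise contracting map with contraction pieces $X_1=[0,c)$ and $X_2=(c,1]$, whose continuous extensions $f_1:[0,c]\to[0,1]$ and $f_2:[c,1]\to[0,1]$ are increasing and satisfy $0=f_2(c)<f_2(1)<f_1(0)<f_1(c)=1$. For $k\in\mathbb{N}$ let $H_k:=f^k\big((f(1),f(0))\big)$. If $c\notin\overline{H_k}$ for all $k\in\mathbb{N}$, then $H_k=(f^{k+1}(1),f^{k+1}(0))$ for all $k\in\mathbb{N}$, \[ \Lambda_n=[0,1]\setminus\bigcup_{k=0}^{n-1}H_k\qquad\forall\, n\geqslant 1, \] $\{0,1\}\subset\widetilde X$, and for every $n\geqslant 1$ and every $A\in\mathcal{A}_n$ there exist $p,q\in\mathbb{N}$ with $A=[f^p(0),f^q(1)]$.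
   Context: Piecewise contracting: $f$ is discontinuous at $c$ and there is $\lambda\in(0,1)$ with $|f(x)-f(y)|\leqslant\lambda|x-y|$ for $x,y$ both in $[0,c)$ or both in $(c,1]$. $\Delta=\{c\}$ and $\widetilde X:=\bigcap_{n\geqslant0}f^{-n}([0,1]\setminus\{c\})$. Atoms: $F_i(A):=\overline{f(A\cap X_i)}$ for $i=1,2$, and $A_{i_1\dots i_n}:=F_{i_n}\circ\dots\circ F_{i_1}([0,1])$ is an atom of generation $n$ if non-empty; $\mathcal{A}_n$ is the set of atoms of generation $n$ and $\Lambda_n:=\bigcup_{A\in\mathcal{A}_n}A$. $f^k(S)$ denotes the image of a set $S$ under $f^k$; $\mathbb{N}=\{0,1,\dots\}$. *)

From HB Require Import structures.
From mathcomp Require Import all_boot all_order all_algebra.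
From mathcomp Require Import all_classical all_reals all_analysis.
Set Implicit Arguments. Unset Strict Implicit. Unset Printing Implicit Defensive.
Import Order.TTheory GRing.Theory Num.Theory.
Import numFieldNormedType.Exports.
Local Open Scope classical_set_scope.
Local Open Scope ring_scope.

Inductive piece := P1 | P2.

Definition piece_set (R : realType) (c : R) (i : piece) : set R :=
  match i with P1 => [set` `[0, c[] | P2 => [set` `]c, 1]] end.

Definition piecewise_contracting (R : realType) (f : R -> R) (c : R) : Prop :=
  ~ {for c, continuous f} /\
  exists lam : R, 0 < lam < 1 /\
    (forall i x y, piece_set c i x -> piece_set c i y ->
       `|f x - f y| <= lam * `|x - y|).

Definition Fmap (R : realType) (f : R -> R) (c : R) (i : piece) (A : set R) : set R :=
  closure (f @` (A `&` piece_set c i)).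

Definition atom_of (R : realType) (f : R -> R) (c : R) (w : seq piece) : set R :=
  foldl (fun A i => Fmap f c i A) [set` `[0, 1]] w.

Definition atoms (R : realType) (f : R -> R) (c : R) (n : nat) : set (set R) :=
  [set A | exists w : seq piece, size w = n /\ A = atom_of f c w /\ A !=set0].

Definition Lambda (R : realType) (f : R -> R) (c : R) (n : nat) : set R :=
  \bigcup_(A in atoms f c n) A.

Definition Xtilde (R : realType) (f : R -> R) (c : R) : set R :=
  \bigcap_(n in [set: nat]) ((iter n f) @^-1` ([set` `[0, 1]] `\ c)).

Definition Hk (R : realType) (f : R -> R) (k : nat) : set R :=
  iter k f @` [set` `]f 1, f 0[].

(* Induction on k: H_k is an open interval ]f^(k+1)(1), f^(k+1)(0)[ whose closure
   misses c, so it lies in one piece, where f is an increasing homeomorphism onto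
   its image; hence H_(k+1) = f(H_k) has the same form.  In particular no iterate
   of 0 or 1 hits c, so each F_i maps a segment [f^p(0), f^q(1)] to a segment of
   the same form, the empty set being [f(0), f(1)].  Since f([0,c)) = [f(0),1) and
   f((c,1]) = (0,f(1)] are disjoint and f is injective on each piece, f(y) in
   H_(k+1) forces y in H_k, so atoms of generation n avoid H_0, ..., H_(n-1);
   conversely a point avoiding them has a preimage in a piece avoiding
   H_0, ..., H_(n-2), except 0 and 1, which are reached from the atom containing c. *)

From HB Require Import structures.
From mathcomp Require Import all_boot all_order all_algebra.
From mathcomp Require Import all_classical all_reals all_analysis.
From mathcomp Require Import ring lra.
Import Order.TTheory GRing.Theory Num.Theory.
Import numFieldNormedType.Exports.
Local Open Scope classical_set_scope.
Local Open Scope ring_scope.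

Set Implicit Arguments.
Unset Strict Implicit.
Unset Printing Implicit Defensive.

Section real_intervals.
Variable R : realType.
Implicit Types (a b s t : R) (la lb : bool).

Lemma closure_itv la lb a b : a < b ->
  closure [set` Interval (BSide la a) (BSide lb b)] = [set` `[a, b]].
Proof.
move=> ab; apply/seteqP; split.
  rewrite closureE; apply: smallest_sub; first exact: itv_closed.
  by apply: subset_itvScc; rewrite bnd_simp.
have ball_closure (x r : R) :
    0 < r -> closure [set` `]x - r, x + r[] = [set` `[x - r, x + r]].
  by move=> r0; rewrite -ball_itv closure_ballE closed_ball_itv.
have r0 : 0 < (b - a) / 2 by rewrite divr_gt0 // subr_gt0.
have := ball_closure ((a + b) / 2) _ r0.
have -> : (a + b) / 2 - (b - a) / 2 = a by field.
have -> : (a + b) / 2 + (b - a) / 2 = b by field.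
move=> <-; apply: closureS; exact: subset_itvW.
Qed.

Lemma closure_itvoo_notin a b (x : R) :
  a < b -> ~ closure [set` `]a, b[] x -> x < a \/ b < x.
Proof.
move=> ab; rewrite closure_itv //= in_itv /= => nx.
have [xa|ax] := ltP x a; [by left | right].
by rewrite ltNge; apply/negP => xb; apply: nx; rewrite ax xb.
Qed.

Lemma image_itv_inc (g : R -> R) s t la lb a b :
  {within `[s, t], continuous g} -> {in `[s, t] &, {homo g : x y / x < y}} ->
  a \in `[s, t] -> b \in `[s, t] -> a <= b ->
  g @` [set` Interval (BSide la a) (BSide lb b)] =
  [set` Interval (BSide la (g a)) (BSide lb (g b))].
Proof.
move=> gc ginc ast bst ab.
have gle := le_mono_in ginc; have glt := leW_mono_in gle.
have abst : [set` `[a, b]] `<=` [set` `[s, t]].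
  by apply: subset_itvScc; rewrite bnd_simp ?(itvP ast) ?(itvP bst).
have mem y : y \in `[s, t] -> (g y \in Interval (BSide la (g a)) (BSide lb (g b))) =
                             (y \in Interval (BSide la a) (BSide lb b)).
  by move=> yst; rewrite !itv_boundlr; case: la lb => [] []; rewrite /= !bnd_simp ?gle ?glt.
have Iab : [set` Interval (BSide la a) (BSide lb b)] `<=` [set` `[a, b]].
  by apply: subset_itvScc; rewrite bnd_simp.
apply/seteqP; split => [_ [y yI <-]|z zI].
  by rewrite /= mem //; apply: abst; apply: Iab.
have gab : g a <= g b by rewrite gle.
have zab : [set` `[g a, g b]] z by apply: subset_itvScc zI; rewrite bnd_simp.
have gabc := continuous_subspaceW abst gc.
have [y yab gyz] := segment_continuous_le_surjective ab gab gabc zab.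
by exists y => //; rewrite /= -mem ?gyz //; exact: abst.
Qed.

Lemma closure_itvcc a b : closure [set` `[a, b]] = [set` `[a, b]].
Proof. by symmetry; apply/closure_id/itv_closed. Qed.

End real_intervals.

Lemma Hk_succ (R : realType) (f : R -> R) k : Hk f k.+1 = f @` Hk f k.
Proof.
apply/seteqP; split => [_ [y yI <-]|_ [_ [y yI <-] <-]]; last by exists y.
by exists (iter k f y) => //; exists y.
Qed.

Lemma atom_of_rcons (R : realType) (f : R -> R) c w i :
  atom_of f c (rcons w i) = Fmap f c i (atom_of f c w).
Proof. by rewrite /atom_of foldl_rcons. Qed.

Lemma piece_set1E (R : realType) (c : R) : piece_set c P1 = [set` `[0, c[].
Proof. by []. Qed.

Lemma piece_set2E (R : realType) (c : R) : piece_set c P2 = [set` `]c, 1]].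
Proof. by []. Qed.

Section increasing_pieces.
Variables (R : realType) (c : R) (f f1 f2 : R -> R).
Hypotheses (c_gt0 : 0 < c) (c_lt1 : c < 1).
Hypothesis f_01 : forall x, x \in `[0, 1] -> f x \in `[0, 1].
Hypotheses (f1_cont : {within [set` `[0, c]], continuous f1})
  (f1_eq : {in `[0, c[, f1 =1 f}) (f1_inc : {in `[0, c] &, {homo f1 : x y / x < y}}).
Hypotheses (f2_cont : {within [set` `[c, 1]], continuous f2})
  (f2_eq : {in `]c, 1], f2 =1 f}) (f2_inc : {in `[c, 1] &, {homo f2 : x y / x < y}}).
Hypotheses (f2c : f2 c = 0) (f2_1_lt_f1_0 : f2 1 < f1 0) (f1c : f1 c = 1).
Hypothesis c_notin_closure_Hk : forall k, ~ closure (Hk f k) c.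

Lemma iter_f_01 n x : x \in `[0, 1] -> iter n f x \in `[0, 1].
Proof. by move=> x01; elim: n => // n IHn; rewrite iterS f_01. Qed.

Lemma iter_f_ends_01 n : iter n f 0 \in `[0, 1] /\ iter n f 1 \in `[0, 1].
Proof. by split; apply: iter_f_01; rewrite bound_itvE ler01. Qed.

Lemma f_0E : f 0 = f1 0.
Proof. by rewrite f1_eq // in_itv /= lexx c_gt0. Qed.

Lemma f_1E : f 1 = f2 1.
Proof. by rewrite f2_eq // in_itv /= lexx c_lt1. Qed.

Lemma f_1_lt_f_0 : f 1 < f 0.
Proof. by rewrite f_0E f_1E. Qed.

Lemma f_0_lt1 : f 0 < 1.
Proof. by rewrite f_0E -f1c; apply: f1_inc; rewrite ?bound_itvE ?(ltW c_gt0). Qed.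

Lemma f_1_gt0 : 0 < f 1.
Proof. by rewrite f_1E -f2c; apply: f2_inc; rewrite ?bound_itvE ?(ltW c_lt1). Qed.

Lemma image_itv_left la lb a b : 0 <= a -> a <= b -> b <= c ->
  [set` Interval (BSide la a) (BSide lb b)] `<=` [set` `[0, c[] ->
  f @` [set` Interval (BSide la a) (BSide lb b)] =
  [set` Interval (BSide la (f1 a)) (BSide lb (f1 b))].
Proof.
move=> a0 ab bc Ic.
have [a0c b0c] : a \in `[0, c] /\ b \in `[0, c] by rewrite !in_itv /=; split; lra.
rewrite -(image_itv_inc _ _ f1_cont f1_inc a0c b0c ab).
by apply: eq_imagel => y /Ic /f1_eq.
Qed.

Lemma image_itv_right la lb a b : c <= a -> a <= b -> b <= 1 ->
  [set` Interval (BSide la a) (BSide lb b)] `<=` [set` `]c, 1]] ->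
  f @` [set` Interval (BSide la a) (BSide lb b)] =
  [set` Interval (BSide la (f2 a)) (BSide lb (f2 b))].
Proof.
move=> ca ab b1 Ic.
have [ac1 bc1] : a \in `[c, 1] /\ b \in `[c, 1] by rewrite !in_itv /=; split; lra.
rewrite -(image_itv_inc _ _ f2_cont f2_inc ac1 bc1 ab).
by apply: eq_imagel => y /Ic /f2_eq.
Qed.

Lemma image_piece1 : f @` piece_set c P1 = [set` `[f 0, 1[].
Proof. by rewrite (image_itv_left (lexx 0) (ltW c_gt0) (lexx c)) // f_0E f1c. Qed.

Lemma image_piece2 : f @` piece_set c P2 = [set` `]0, f 1]].
Proof. by rewrite (image_itv_right (lexx c) (ltW c_lt1) (lexx 1)) // f_1E f2c. Qed.

Lemma Hk0E : Hk f 0 = [set` `]f 1, f 0[].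
Proof. by apply/seteqP; split => [_ [y yI <-] | y yI] //; exists y. Qed.

Lemma image_itvoo_off_c a b : 0 <= a -> a < b -> b <= 1 -> c < a \/ b < c ->
  f a < f b /\ f @` [set` `]a, b[] = [set` `]f a, f b[].
Proof.
move=> a0 ab b1 [ca|bc].
- have [fa fb] : f2 a = f a /\ f2 b = f b by split; apply: f2_eq; rewrite in_itv /=; lra.
  rewrite -fa -fb (image_itv_right (ltW ca) (ltW ab) b1);
    last by move=> y /=; rewrite !in_itv /=; lra.
  by split => //; apply: f2_inc => //; rewrite in_itv /=; lra.
- have [fa fb] : f1 a = f a /\ f1 b = f b by split; apply: f1_eq; rewrite in_itv /=; lra.
  rewrite -fa -fb (image_itv_left a0 (ltW ab) (ltW bc));
    last by move=> y /=; rewrite !in_itv /=; lra.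
  by split => //; apply: f1_inc => //; rewrite in_itv /=; lra.
Qed.

Lemma Hk_itv k :
  iter k.+1 f 1 < iter k.+1 f 0 /\ Hk f k = [set` `]iter k.+1 f 1, iter k.+1 f 0[].
Proof.
elim: k => [|k [lt E]]; first by rewrite Hk0E f_1_lt_f_0.
have side : c < iter k.+1 f 1 \/ iter k.+1 f 0 < c.
  by apply: (closure_itvoo_notin lt); rewrite -E; exact: c_notin_closure_Hk.
have [b01 a01] := iter_f_ends_01 k.+1.
by rewrite Hk_succ E; apply: image_itvoo_off_c side; rewrite ?(itvP a01) ?(itvP b01).
Qed.

Lemma HkE k : Hk f k = [set` `]iter k.+1 f 1, iter k.+1 f 0[].
Proof. by have [] := Hk_itv k. Qed.

Lemma closure_HkE k : closure (Hk f k) = [set` `[iter k.+1 f 1, iter k.+1 f 0]].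
Proof. by have [lt ->] := Hk_itv k; exact: closure_itv. Qed.

Lemma Hk_side k : c < iter k.+1 f 1 \/ iter k.+1 f 0 < c.
Proof.
have [lt E] := Hk_itv k.
by apply: (closure_itvoo_notin lt); rewrite -E; exact: c_notin_closure_Hk.
Qed.

Lemma iter_f_ends_neq_c n : iter n f 0 != c /\ iter n f 1 != c.
Proof.
case: n => [|k]; first by rewrite lt_eqF // gt_eqF.
have := @c_notin_closure_Hk k; rewrite closure_HkE /= in_itv /= => notin.
have [lt _] := Hk_itv k.
by split; apply/eqP => e; apply: notin; rewrite -e lexx (ltW lt).
Qed.

Lemma piece_set01 i y : piece_set c i y -> y \in `[0, 1].
Proof.
(* [lra] ignores section hypotheses, hence the local copies. *)
have c0 := c_gt0; have c1 := c_lt1.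
by case: i; rewrite ?piece_set1E ?piece_set2E /= !in_itv /= => yi; lra.
Qed.

Lemma piece_inj i y z : piece_set c i y -> piece_set c i z -> f y = f z -> y = z.
Proof.
case: i => yi zi; [rewrite -(f1_eq yi) -(f1_eq zi) | rewrite -(f2_eq yi) -(f2_eq zi)].
  by apply: (mono_inj_in lexx le_anti (le_mono_in f1_inc)); exact: subset_itv_co_cc.
by apply: (mono_inj_in lexx le_anti (le_mono_in f2_inc)); exact: subset_itv_oc_cc.
Qed.

Lemma image_pieces_disjoint x :
  (f @` piece_set c P1) x -> (f @` piece_set c P2) x -> False.
Proof.
rewrite image_piece1 image_piece2 /= !in_itv /=.
by have := f_1_lt_f_0; lra.
Qed.

Lemma image_pieces_cover x : 0 < x < 1 -> ~ Hk f 0 x -> exists i, (f @` piece_set c i) x.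
Proof.
rewrite Hk0E /= in_itv /= => x01 xH0.
suff : [set` `[f 0, 1[] x \/ [set` `]0, f 1]] x.
  by rewrite -image_piece1 -image_piece2 => -[]; [exists P1 | exists P2].
by rewrite /= !in_itv /=; have [f0x|xf0] := leP (f 0) x; [left | right]; lra.
Qed.

Lemma Hk_sub_piece k : exists i, Hk f k `<=` piece_set c i.
Proof.
rewrite HkE; have := Hk_side k; have [b01 a01] := iter_f_ends_01 k.+1.
move: (iter k.+1 f 1) (iter k.+1 f 0) a01 b01 => a b; rewrite !in_itv /= => a01 b01.
have c0 := c_gt0; have c1 := c_lt1.
case=> [ca|bc]; [exists P2 | exists P1] => y;
  by rewrite ?piece_set1E ?piece_set2E /= !in_itv /=; lra.
Qed.

Lemma Hk_preimage k i y : piece_set c i y -> Hk f k.+1 (f y) -> Hk f k y.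
Proof.
rewrite Hk_succ => yi [z zH fzy]; have [j Hj] := Hk_sub_piece k; have zj := Hj z zH.
have ij : i = j.
  case: i j yi zj {Hj} => [] [] yi zj //; exfalso;
    by apply: (image_pieces_disjoint (x := f y)); solve [by exists y | by exists z].
by subst j; rewrite -(piece_inj zj yi fzy).
Qed.

Lemma Fmap_avoids_Hk i A k x :
  (forall y, A y -> ~ Hk f k y) -> Fmap f c i A x -> ~ Hk f k.+1 x.
Proof.
move=> A_avoids xA xH; have [lt E] := Hk_itv k.+1.
have : nbhs x (Hk f k.+1).
  by rewrite E; apply: open_nbhs_nbhs; split; [exact: itv_open | rewrite -E].
by move=> /xA [_ [[y [Ay yi] <-] fyH]]; exact: A_avoids Ay (Hk_preimage yi fyH).
Qed.

Lemma Fmap1_sub A : Fmap f c P1 A `<=` [set` `[f 0, 1]].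
Proof.
rewrite /Fmap -(closure_itv true true f_0_lt1) -image_piece1.
by apply/closureS/image_subset; exact: subIsetr.
Qed.

Lemma Fmap2_sub A : Fmap f c P2 A `<=` [set` `[0, f 1]].
Proof.
rewrite /Fmap -(closure_itv false false f_1_gt0) -image_piece2.
by apply/closureS/image_subset; exact: subIsetr.
Qed.

Lemma Fmap_avoids_H0 i A x : Fmap f c i A x -> ~ Hk f 0 x.
Proof.
rewrite Hk0E /= in_itv /=; have := f_1_lt_f_0.
case: i => lt xA; [have := Fmap1_sub xA | have := Fmap2_sub xA];
  by rewrite /= in_itv /=; lra.
Qed.

Lemma atom_avoids_Hk w k x : (k < size w)%N -> atom_of f c w x -> ~ Hk f k x.
Proof.
elim/last_ind: w k x => [|w i IHw] k x //.
rewrite size_rcons ltnS atom_of_rcons; case: k => [_|k kw]; first exact: Fmap_avoids_H0.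
by apply: Fmap_avoids_Hk => y; exact: IHw.
Qed.

Lemma Fmap_set0 i : Fmap f c i set0 = set0.
Proof. by rewrite /Fmap set0I image_set0 closure0. Qed.

Lemma Fmap1_segment_below x y : 0 <= x -> x <= y -> y < c ->
  Fmap f c P1 [set` `[x, y]] = [set` `[f x, f y]].
Proof.
move=> x0 xy yc; have [fx fy] : f1 x = f x /\ f1 y = f y.
  by split; apply: f1_eq; rewrite in_itv /=; lra.
have sub : [set` `[x, y]] `<=` [set` `[0, c[] by move=> z /=; rewrite !in_itv /=; lra.
rewrite /Fmap piece_set1E setIidl // (image_itv_left x0 xy (ltW yc)) //.
by rewrite closure_itvcc fx fy.
Qed.

Lemma Fmap1_segment_across x y : 0 <= x -> x < c -> c < y ->
  Fmap f c P1 [set` `[x, y]] = [set` `[f x, 1]].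
Proof.
move=> x0 xc cy; have fx : f1 x = f x by apply: f1_eq; rewrite in_itv /=; lra.
rewrite /Fmap; have -> : [set` `[x, y]] `&` piece_set c P1 = [set` `[x, c[].
  by rewrite piece_set1E; apply/seteqP; split => z /=; rewrite !in_itv /=; lra.
rewrite (image_itv_left x0 (ltW xc) (lexx c));
  last by move=> z /=; rewrite !in_itv /=; lra.
have fx1 : f x < 1.
  by rewrite -fx -f1c; apply: f1_inc; rewrite ?in_itv /=; lra.
by rewrite f1c fx closure_itv.
Qed.

Lemma Fmap1_segment_above x y : c < x -> Fmap f c P1 [set` `[x, y]] = set0.
Proof.
move=> cx; rewrite -(Fmap_set0 P1) /Fmap piece_set1E; congr (closure (f @` _)).
by apply/seteqP; split => z //=; rewrite !in_itv /=; lra.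
Qed.

Lemma Fmap2_segment_above x y : c < x -> x <= y -> y <= 1 ->
  Fmap f c P2 [set` `[x, y]] = [set` `[f x, f y]].
Proof.
move=> cx xy y1; have [fx fy] : f2 x = f x /\ f2 y = f y.
  by split; apply: f2_eq; rewrite in_itv /=; lra.
have sub : [set` `[x, y]] `<=` [set` `]c, 1]] by move=> z /=; rewrite !in_itv /=; lra.
rewrite /Fmap piece_set2E setIidl // (image_itv_right (ltW cx) xy y1) //.
by rewrite closure_itvcc fx fy.
Qed.

Lemma Fmap2_segment_across x y : x < c -> c < y -> y <= 1 ->
  Fmap f c P2 [set` `[x, y]] = [set` `[0, f y]].
Proof.
move=> xc cy y1; have fy : f2 y = f y by apply: f2_eq; rewrite in_itv /=; lra.
rewrite /Fmap; have -> : [set` `[x, y]] `&` piece_set c P2 = [set` `]c, y]].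
  by rewrite piece_set2E; apply/seteqP; split => z /=; rewrite !in_itv /=; lra.
rewrite (image_itv_right (lexx c) (ltW cy) y1);
  last by move=> z /=; rewrite !in_itv /=; lra.
have fy0 : 0 < f y.
  by rewrite -fy -f2c; apply: f2_inc; rewrite ?in_itv /=; lra.
by rewrite f2c fy closure_itv.
Qed.

Lemma Fmap2_segment_below x y : y < c -> Fmap f c P2 [set` `[x, y]] = set0.
Proof.
move=> yc; rewrite -(Fmap_set0 P2) /Fmap piece_set2E; congr (closure (f @` _)).
by apply/seteqP; split => z //=; rewrite !in_itv /=; lra.
Qed.

Lemma Fmap_segment_iter i p q : exists p' q',
  Fmap f c i [set` `[iter p f 0, iter q f 1]] = [set` `[iter p' f 0, iter q' f 1]].
Proof.
have empty : set0 = [set` `[iter 1 f 0, iter 1 f 1]].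
  by rewrite set_itv_ge // bnd_simp -ltNge f_1_lt_f_0.
have [x01 _] := iter_f_ends_01 p; have [_ y01] := iter_f_ends_01 q.
have [/lt_total/orP xc _] := iter_f_ends_neq_c p.
have [_ /lt_total/orP yc] := iter_f_ends_neq_c q.
set x := iter p f 0 in x01 xc *; set y := iter q f 1 in y01 yc *.
rewrite in_itv /= in x01; rewrite in_itv /= in y01.
have [yx|xy] := ltP y x.
  by exists 1%N, 1%N; rewrite -empty set_itv_ge ?Fmap_set0 // bnd_simp -ltNge.
case: i; case: xc => [x_lt_c|c_lt_x].
- case: yc => [y_lt_c|c_lt_y].
    by exists p.+1, q.+1; rewrite Fmap1_segment_below //; case/andP: x01.
  by exists p.+1, 0%N; rewrite Fmap1_segment_across //; case/andP: x01.
- by exists 1%N, 1%N; rewrite Fmap1_segment_above.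
- case: yc => [y_lt_c|c_lt_y]; first by exists 1%N, 1%N; rewrite Fmap2_segment_below.
  by exists 0%N, q.+1; rewrite Fmap2_segment_across //; case/andP: y01.
- by exists p.+1, q.+1; rewrite Fmap2_segment_above //; case/andP: y01.
Qed.

Lemma atom_segment w : exists p q, atom_of f c w = [set` `[iter p f 0, iter q f 1]].
Proof.
elim/last_ind: w => [|w i [p [q Ew]]]; first by exists 0%N, 0%N.
by rewrite atom_of_rcons Ew; exact: Fmap_segment_iter.
Qed.

Lemma atom_sub01 w : atom_of f c w `<=` [set` `[0, 1]].
Proof.
have [p [q ->]] := atom_segment w.
have [x01 _] := iter_f_ends_01 p; have [_ y01] := iter_f_ends_01 q.
by apply: subset_itvScc; rewrite bnd_simp ?(itvP x01) ?(itvP y01).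
Qed.

Lemma atom_rcons_image w i y :
  atom_of f c w y -> piece_set c i y -> atom_of f c (rcons w i) (f y).
Proof. by move=> wy yi; rewrite atom_of_rcons; apply: subset_closure; exists y. Qed.

Lemma atom_rcons_ends w :
  atom_of f c w c -> atom_of f c (rcons w P1) 1 /\ atom_of f c (rcons w P2) 0.
Proof.
have [p [q Ew]] := atom_segment w; rewrite !atom_of_rcons Ew /= in_itv /= => /andP[xc cy].
have [x_neq_c _] := iter_f_ends_neq_c p; have [_ y_neq_c] := iter_f_ends_neq_c q.
have {}xc : iter p f 0 < c by rewrite lt_neqAle x_neq_c.
have {}cy : c < iter q f 1 by rewrite lt_neqAle eq_sym y_neq_c.
have [x01 _] := iter_f_ends_01 p; have [_ y01] := iter_f_ends_01 q.
have [fx01 _] := iter_f_ends_01 p.+1; have [_ fy01] := iter_f_ends_01 q.+1.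
rewrite !in_itv /= in x01 y01 fx01 fy01.
have [x0 y1] : 0 <= iter p f 0 /\ iter q f 1 <= 1 by split; lra.
rewrite (Fmap1_segment_across x0 xc cy) (Fmap2_segment_across xc cy y1).
by rewrite /= !in_itv /=; split; lra.
Qed.

Lemma atom_cover n x : x \in `[0, 1] -> (forall k, (k < n)%N -> ~ Hk f k x) ->
  exists2 w, size w = n & atom_of f c w x.
Proof.
elim: n x => [|n IHn] x x01 xH; first by exists [::].
have [wc swc wcc] : exists2 w, size w = n & atom_of f c w c.
  apply: IHn => [|k _ /subset_closure]; last exact: c_notin_closure_Hk.
  by rewrite in_itv /= (ltW c_gt0) (ltW c_lt1).
have [->|x_neq0] := eqVneq x 0.
  by exists (rcons wc P2); [rewrite size_rcons swc | case: (atom_rcons_ends wcc)].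
have [->|x_neq1] := eqVneq x 1.
  by exists (rcons wc P1); [rewrite size_rcons swc | case: (atom_rcons_ends wcc)].
have x_in : 0 < x < 1.
  by move: x01; rewrite in_itv /= !lt_neqAle eq_sym x_neq0 x_neq1.
have [i [y yi fyx]] := image_pieces_cover x_in (xH 0%N isT).
have y_avoids k : (k < n)%N -> ~ Hk f k y.
  by move=> kn yH; apply: (xH k.+1 kn); rewrite -fyx Hk_succ; exists y.
have [w sw wy] := IHn y (piece_set01 yi) y_avoids.
by exists (rcons w i); [rewrite size_rcons sw | rewrite -fyx; exact: atom_rcons_image].
Qed.

Lemma LambdaE n : Lambda f c n = [set` `[0, 1]] `\` \bigcup_(k in `I_n) Hk f k.
Proof.
apply/seteqP; split => [x [_ [w [sw [-> _]]] wx] | x [x01 xH]].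
  split; first exact: atom_sub01 wx.
  by move=> [k kn kx]; apply: (atom_avoids_Hk _ wx kx); rewrite sw.
have [w sw wx] : exists2 w, size w = n & atom_of f c w x.
  by apply: atom_cover => // k kn kx; apply: xH; exists k.
by exists (atom_of f c w) => //; exists w; split => //; split => //; exists x.
Qed.

Lemma ends_in_Xtilde : [set (0 : R); 1] `<=` Xtilde f c.
Proof.
move=> _ [->|->] n _; have [x01 y01] := iter_f_ends_01 n;
  by have [xc yc] := iter_f_ends_neq_c n; split => //; exact/eqP.
Qed.

Lemma atoms_segment n A : atoms f c n A -> exists p q, A = [set` `[iter p f 0, iter q f 1]].
Proof. by move=> [w [_ [-> _]]]; exact: atom_segment. Qed.

End increasing_pieces.

Theorem lemma7 (R : realType) (c : R) (f : R -> R) :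
  0 < c < 1 ->
  (forall x, x \in `[0, 1] -> f x \in `[0, 1]) ->
  piecewise_contracting f c ->
  (exists f1 f2 : R -> R,
     [/\ {within [set` `[0, c]], continuous f1},
         {in `[0, c[, f1 =1 f} &
         {in `[0, c] &, {homo f1 : x y / x < y}}] /\
     [/\ {within [set` `[c, 1]], continuous f2},
         {in `]c, 1], f2 =1 f} &
         {in `[c, 1] &, {homo f2 : x y / x < y}}] /\
     (0 = f2 c /\ f2 c < f2 1 /\ f2 1 < f1 0 /\ f1 0 < f1 c /\ f1 c = 1)) ->
  (forall k : nat, ~ closure (Hk f k) c) ->
  [/\ (forall k : nat, Hk f k = [set` `]iter k.+1 f 1, iter k.+1 f 0[]),
      (forall n : nat, (1 <= n)%N ->
         Lambda f c n = [set` `[0, 1]] `\` \bigcup_(k in `I_n) Hk f k),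
      [set (0 : R); 1] `<=` Xtilde f c &
      (forall n : nat, (1 <= n)%N -> forall A, atoms f c n A ->
         exists p q : nat, A = [set` `[iter p f 0, iter q f 1]])].
Proof.
move=> /andP[c_gt0 c_lt1] f_01 _.
move=> [f1 [f2 [[f1_cont f1_eq f1_inc] [[f2_cont f2_eq f2_inc]]]]].
move=> [/esym f2c [_ [gap [_ f1c]]]].
move=> c_notin_closure_Hk; split.
- exact: (HkE (c := c) (f1 := f1) (f2 := f2)).
- by move=> n _; exact: (LambdaE (c := c) (f1 := f1) (f2 := f2)).
- exact: (ends_in_Xtilde (c := c) (f1 := f1) (f2 := f2)).
- by move=> n _; exact: (atoms_segment (c := c) (f1 := f1) (f2 := f2)).
Qed.
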